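(* Let $\Sigma$ be an $n\times n$ Hermitian positive semidefinite matrix which is irreducible. If the argument of each non-zero off-diagonal entry of $-\Sigma$ lies in $\left(-\frac{\pi}{2^n},\frac{\pi}{2^n}\right)$, then ${\operatorname{mr}}(\Sigma)=n-1$, where \[{\operatorname{mr}}(\Sigma)=\min\{\operatorname{rank}(\hat\Sigma)\mid \Sigma=\tilde\Sigma+\hat\Sigma,\ \hat\Sigma\text{ Hermitian positive semidefinite},\ \tilde\Sigma\text{ diagonal}\}.\]
   Context: A square matrix is irreducible if it cannot be brought into block-diagonal form (with at least two diagonal blocks) by a simultaneous permutation of its rows and columns. In the definition of ${\operatorname{mr}}$ the diagonal matrix $\tilde\Sigma$ (necessarily real, since $\Sigma-\hat\Sigma$ is Hermitian) is not required to be positive semidefinite. *)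

From HB Require Import structures.
From mathcomp Require Import all_boot all_order all_algebra all_fingroup.
From mathcomp Require Import complex.
From mathcomp Require Import reals trigo.
Set Implicit Arguments. Unset Strict Implicit. Unset Printing Implicit Defensive.
Import Order.TTheory GRing.Theory Num.Theory.
Local Open Scope ring_scope.
Local Open Scope complex_scope.

Section Defs.
Variable R : realType.
Notation C := (R[i]).

Definition ctrmx (m n : nat) (A : 'M[C]_(m, n)) : 'M[C]_(n, m) :=
  (map_mx (fun z : C => z^*) A)^T.

Definition hermitian (n : nat) (A : 'M[C]_n) : Prop := ctrmx A = A.

Definition psd (n : nat) (A : 'M[C]_n) : Prop :=
  hermitian A /\ forall x : 'cV[C]_n, 0 <= (ctrmx x *m A *m x) 0 0.

Definition is_diag (n : nat) (A : 'M[C]_n) : Prop :=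
  forall i j : 'I_n, i != j -> A i j = 0.

Definition reducible (n : nat) (A : 'M[C]_n) : Prop :=
  exists (s : 'S_n) (k : nat), (0 < k < n)%N /\
    forall i j : 'I_n, (i < k)%N != (j < k)%N -> A (s i) (s j) = 0.

Definition irreducible (n : nat) (A : 'M[C]_n) : Prop := ~ reducible A.

Definition arg_in (z : C) (a b : R) : Prop :=
  exists t : R, a < t < b /\ z = `|z| * (cos t +i* sin t).

Definition decomp (n : nat) (S Sh St : 'M[C]_n) : Prop :=
  S = St + Sh /\ psd Sh /\ is_diag St.

Definition is_mr (n : nat) (S : 'M[C]_n) (r : nat) : Prop :=
  (exists Sh St : 'M[C]_n, decomp S Sh St /\ \rank Sh = r) /\
  (forall Sh St : 'M[C]_n, decomp S Sh St -> (r <= \rank Sh)%N).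
End Defs.

(* Upper bound: from any positive semidefinite matrix one can subtract a diagonal
   matrix so that it stays positive semidefinite and becomes singular; recurse
   through the Schur complement of the head pivot.
   Lower bound: a decomposition leaves the off-diagonal entries unchanged, so the
   positive semidefinite part [H] inherits a connected support graph and has the
   off-diagonal entries of [-H] in the sector [|arg z| < pi / 2^n].  The Schur
   complement of a positive pivot keeps both properties, except that the sector
   doubles: its entries are [-H_ij] plus a positive multiple of
   [(-H_i0) (-H_0j)].  As sums of sector elements only vanish when all terms do,
   connectivity survives.  After [n - 1] steps the sector is still within a right
   angle, so a kernel vector of [H] vanishing at the last index is zero, and
   [rank H >= n - 1]. *)

From Pilot Require Import Defs.
From HB Require Import structures.
From mathcomp Require Import all_boot all_order all_algebra all_fingroup.
From mathcomp Require Import complex.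
From mathcomp Require Import reals trigo.
From mathcomp Require Import ring lra.
Import Order.TTheory GRing.Theory Num.Theory.
Local Open Scope ring_scope.
Local Open Scope complex_scope.
Set Implicit Arguments. Unset Strict Implicit. Unset Printing Implicit Defensive.

Section Sector.
Variable R : realType.
Local Notation C := R[i].
Local Notation Re := (@complex.Re R).
Local Notation Im := (@complex.Im R).
Implicit Types (a b : R) (z w k : C).

(* For [0 < a <= pi / 2], the open sector [|arg z| < a], stated without [arg]. *)
Definition sector a z : Prop := `|Im z| * cos a < Re z * sin a.

Definition sector0 a z : Prop := z = 0 \/ sector a z.

Lemma sector_neq0 a z : sector a z -> z != 0.
Proof. by apply: contraTneq => ->; rewrite /sector /= normr0 !mul0r ltxx. Qed.

Lemma sector_Re_gt0 a z : 0 < sin a -> 0 <= cos a -> sector a z -> 0 < Re z.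
Proof.
move=> sa ca hz; rewrite -(pmulr_lgt0 _ sa).
by apply: le_lt_trans hz; rewrite mulr_ge0.
Qed.

Lemma sectorD b z w : 0 <= cos b -> sector b z -> sector b w -> sector b (z + w).
Proof.
case: z w => x y [u v] cb /= hz hw.
apply: le_lt_trans (_ : (`|y| + `|v|) * cos b < _); first exact: ler_wpM2r (ler_normD _ _).
by rewrite !mulrDl ltrD.
Qed.

Lemma sectorD0 b z w : 0 <= cos b -> sector b z -> sector0 b w -> sector b (z + w).
Proof. by move=> cb hz [->|hw]; [rewrite addr0 | exact: sectorD]. Qed.

Lemma sector0D b z w : 0 <= cos b -> sector0 b z -> sector0 b w -> sector0 b (z + w).
Proof. by move=> cb [->|hz] hw; [rewrite add0r | right; exact: sectorD0]. Qed.

Lemma sector_mulr_gt0 b z k : 0 < k -> sector b z -> sector b (z * k).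
Proof.
case: z k => x y [r t]; rewrite ltcE /= => /andP[/eqP-> r0] hz.
rewrite /sector; simpc; rewrite /= normrM (gtr0_norm r0).
by rewrite ![_ * r * _]mulrAC ltr_pM2r.
Qed.

Lemma sector0_mulr_gt0 b z k : 0 < k -> sector0 b z -> sector0 b (z * k).
Proof. by move=> k0 [->|hz]; [left; rewrite mul0r | right; exact: sector_mulr_gt0]. Qed.

Section DoubleAngle.
Variable a : R.
Hypotheses (sin_gt0 : 0 < sin a) (cos_gt0 : 0 < cos a) (cos2_ge0 : 0 <= cos (a *+ 2)).

Let cos2E : cos (a *+ 2) = cos a ^+ 2 - sin a ^+ 2.
Proof. by rewrite cos_mulr2n -(cos2Dsin2 a); ring. Qed.

Lemma sector_double z : sector a z -> sector (a *+ 2) z.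
Proof.
move=> hz; have x0 := sector_Re_gt0 sin_gt0 (ltW cos_gt0) hz.
move: cos2_ge0 hz x0; rewrite /sector sin_mulr2n cos2E.
case: z => x y /=; set s := sin a; set c := cos a; set Y := `|y| => cs hz x0.
have Y0 : 0 <= Y by apply: normr_ge0.
have p0 : 0 < x * s - Y * c by rewrite subr_gt0.
rewrite -(ltr_pM2r sin_gt0) -subr_gt0.
have -> : x * (c * s *+ 2) * s - Y * (c ^+ 2 - s ^+ 2) * s =
    2 * c * s * (x * s - Y * c) + s * Y * (c ^+ 2 + s ^+ 2) by ring.
apply: ltr_pwDl; first by rewrite !mulr_gt0.
by rewrite !mulr_ge0 ?addr_ge0 ?sqr_ge0 // ltW.
Qed.

(* The identity below is the polynomial form of
   [|arg (z w)| <= |arg z| + |arg w| < 2 a]. *)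
Lemma sectorM z w : sector a z -> sector a w -> sector (a *+ 2) (z * w).
Proof.
move=> hz hw.
have x0 := sector_Re_gt0 sin_gt0 (ltW cos_gt0) hz.
have u0 := sector_Re_gt0 sin_gt0 (ltW cos_gt0) hw.
move: cos2_ge0 hz hw x0 u0; rewrite /sector sin_mulr2n cos2E.
case: z w => x y [u v] /=; set s := sin a; set c := cos a.
set Y := `|y|; set V := `|v| => cs hz hw x0 u0.
have Y0 : 0 <= Y by apply: normr_ge0.
have V0 : 0 <= V by apply: normr_ge0.
have Im_le : `|x * v + y * u| <= x * V + Y * u.
  by apply: le_trans (ler_normD _ _) _; rewrite !normrM (gtr0_norm x0) (gtr0_norm u0).
have Re_ge : y * v <= Y * V by rewrite /Y /V -normrM; apply: ler_norm.
apply: le_lt_trans (ler_wpM2r cs Im_le) _.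
apply: (@lt_le_trans _ _ ((x * u - Y * V) * ((c * s) *+ 2))); last first.
  apply: ler_wpM2r; first by rewrite mulrn_wge0 // mulr_ge0 // ltW.
  by rewrite lerD2l lerN2.
have p0 : 0 < x * s - Y * c by rewrite subr_gt0.
have q0 : 0 < u * s - V * c by rewrite subr_gt0.
rewrite -(ltr_pM2r (mulr_gt0 sin_gt0 sin_gt0)) -subr_gt0.
have -> : (x * u - Y * V) * ((c * s) *+ 2) * (s * s)
    - (x * V + Y * u) * (c ^+ 2 - s ^+ 2) * (s * s)
  = 2 * c * s * (x * s - Y * c) * (u * s - V * c)
    + s * ((x * s - Y * c) * V + (u * s - V * c) * Y) * (c ^+ 2 + s ^+ 2) by ring.
apply: ltr_pwDl; first by rewrite !mulr_gt0.
apply: mulr_ge0; last by rewrite addr_ge0 ?sqr_ge0.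
by apply: mulr_ge0; [exact: ltW | rewrite addr_ge0 // mulr_ge0 // ltW].
Qed.

Lemma sector0_double z : sector0 a z -> sector0 (a *+ 2) z.
Proof. by case=> [->|hz]; [left | right; exact: sector_double]. Qed.

Lemma sector0M z w : sector0 a z -> sector0 a w -> sector0 (a *+ 2) (z * w).
Proof.
case=> [->|hz]; first by left; rewrite mul0r.
by case=> [->|hw]; [left; rewrite mulr0 | right; exact: sectorM].
Qed.

End DoubleAngle.

Lemma quarter_angle_trig a : 0 < a -> a *+ 4 <= pi ->
  [/\ 0 < sin a, 0 < cos a & 0 <= cos (a *+ 2)].
Proof.
move=> a0 a4; have pi0 : 0 < pi :> R by exact: pi_gt0.
split.
- by apply: sin_gt0_pihalf; apply/andP; split; lra.
- by apply: cos_gt0_pihalf; apply/andP; split; lra.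
- by apply: cos_ge0_pihalf; apply/andP; split; lra.
Qed.

Lemma arg_in_sector a z : 0 < a -> a <= pi / 2 -> z != 0 -> arg_in z (- a) a ->
  sector a z.
Proof.
move=> a0 ah zn0 [t [/andP[ta1 ta2] ez]].
have pi0 : 0 < pi :> R by exact: pi_gt0.
have z0 : 0 < `|z| by rewrite normr_gt0.
have [r [er r0]] : exists r : R, `|z| = r%:C /\ 0 < r.
  by move: z0; rewrite normc_def ltcR; eexists.
rewrite ez er /sector; simpc; rewrite /= normrM (gtr0_norm r0) -!mulrA ltr_pM2l //.
rewrite -subr_gt0; case: (lerP 0 t) => t0.
  have st : 0 <= sin t by apply: sin_ge0_pi; apply/andP; split; lra.
  rewrite (ger0_norm st).
  have -> : cos t * sin a - sin t * cos a = sin (a - t) by rewrite sinB; ring.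
  by apply: sin_gt0_pi; apply/andP; split; lra.
have st : sin t <= 0.
  have : 0 <= sin (- t) by apply: sin_ge0_pi; apply/andP; split; lra.
  by rewrite sinN oppr_ge0.
rewrite (ler0_norm st).
have -> : cos t * sin a - - sin t * cos a = sin (a + t) by rewrite sinD; ring.
by apply: sin_gt0_pi; apply/andP; split; lra.
Qed.

End Sector.
Section QuadraticForm.
Variable R : realType.
Local Notation C := R[i].
Local Notation cj := (@conjc R).

Definition qform n (A : 'M[C]_n) (x : 'cV[C]_n) : C := (ctrmx x *m A *m x) 0 0.

Lemma qformE n (A : 'M[C]_n) x : qform A x = \sum_k cj (x k 0) * (A *m x) k 0.
Proof. by rewrite /qform -mulmxA mxE; apply: eq_bigr => k _; rewrite !mxE. Qed.

Lemma hermitian_conj n (A : 'M[C]_n) (i j : 'I_n) : Defs.hermitian A -> cj (A j i) = A i j.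
Proof. by move=> hA; rewrite -[in RHS](hA : ctrmx A = A) !mxE. Qed.

Lemma hermitianB n (A B : 'M[C]_n) : Defs.hermitian A -> Defs.hermitian B -> Defs.hermitian (A - B).
Proof. by move=> hA hB; apply/matrixP => i j; rewrite !mxE rmorphB /= !hermitian_conj. Qed.

Lemma ctrmxD m n (A B : 'M[C]_(m, n)) : ctrmx (A + B) = ctrmx A + ctrmx B.
Proof. by apply/matrixP => i j; rewrite !mxE rmorphD. Qed.

Lemma ctrmxZ m n c (A : 'M[C]_(m, n)) : ctrmx (c *: A) = cj c *: ctrmx A.
Proof. by apply/matrixP => i j; rewrite !mxE rmorphM. Qed.

Lemma ctrmx_delta_mulmx n (A : 'M[C]_n) i j :
  (ctrmx (delta_mx i 0 : 'cV[C]_n) *m A *m (delta_mx j 0 : 'cV[C]_n)) 0 0 = A i j.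
Proof.
have -> : ctrmx (delta_mx i 0 : 'cV[C]_n) = (delta_mx 0 i : 'rV[C]_n).
  by apply/matrixP => k l; rewrite !mxE andbC; case: (_ && _); rewrite ?conjc1 ?conjc0.
by rewrite -rowE -colE !mxE.
Qed.

Lemma qform_delta n (A : 'M[C]_n) i : qform A (delta_mx i 0) = A i i.
Proof. exact: ctrmx_delta_mulmx. Qed.

Lemma qform_scale_deltaD n (A : 'M[C]_n) i j c :
  qform A (c *: delta_mx i 0 + delta_mx j 0) =
  cj c * c * A i i + cj c * A i j + A j i * c + A j j.
Proof.
rewrite /qform ctrmxD ctrmxZ !mulmxDl !mulmxDr -!scalemxAl -!scalemxAr.
have addE (U V : 'M[C]_1) : (U + V) 0 0 = U 0 0 + V 0 0 by rewrite mxE.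
have scaleE d (U : 'M[C]_1) : (d *: U) 0 0 = d * U 0 0 by rewrite mxE.
by rewrite !addE !scaleE !ctrmx_delta_mulmx; ring.
Qed.

Lemma psd0 n : psd (0 : 'M[C]_n).
Proof.
split; first by apply/matrixP => i j; rewrite !mxE conjc0.
by move=> x; rewrite mulmx0 mul0mx mxE.
Qed.

Lemma psd_diag_ge0 n (A : 'M[C]_n) i : psd A -> 0 <= A i i.
Proof. by case=> _ hA; rewrite -qform_delta; apply: hA. Qed.

(* Testing the form on [c e_i + e_j] with [c^* A_ij = - (A_jj + 1)] gives [- A_jj - 2]. *)
Lemma psd_row_eq0 n (A : 'M[C]_n) i j : psd A -> A i i = 0 -> A i j = 0.
Proof.
move=> [hA hpos] Aii0; apply/eqP/negPn/negP => Aij0.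
have Ajj_ge0 := psd_diag_ge0 j (conj hA hpos).
have Ajj_real : cj (A j j) = A j j by exact: hermitian_conj.
have Aij_conj0 : cj (A i j) != 0 by rewrite conjc_eq0.
set c := - (A j j + 1) / cj (A i j).
have c_conj : cj c = - (A j j + 1) / A i j.
  by rewrite /c fmorph_div rmorphN rmorphD rmorph1 /= Ajj_real conjcK.
have := hpos (c *: delta_mx i 0 + delta_mx j 0).
rewrite -/(qform _ _) qform_scale_deltaD Aii0 mulr0 add0r c_conj.
rewrite -(hermitian_conj j i hA) /c.
have -> : - (A j j + 1) / A i j * A i j + cj (A i j) * (- (A j j + 1) / cj (A i j)) + A j j
    = - A j j - 2%:R by field; rewrite Aij0 Aij_conj0.
move=> h; have := addr_ge0 h Ajj_ge0; rewrite addrAC addNr add0r oppr_ge0.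
by move/(lt_le_trans (ltr0Sn C 1)); rewrite ltxx.
Qed.

End QuadraticForm.

Section Schur.
Variables (R : realType) (m : nat).
Local Notation C := R[i].
Local Notation cj := (@conjc R).
Local Notation l0 := (lift ord0).
Implicit Types (K : 'M[C]_m.+1) (x : 'cV[C]_m.+1) (y : 'cV[C]_m).

Definition schur K : 'M[C]_m := \matrix_(i, j)
  (K (l0 i) (l0 j) - K (l0 i) 0 * K 0 (l0 j) / K 0 0).

Definition tail_col x : 'cV[C]_m := \col_i x (l0 i) 0.

Definition schur_ext K y : 'cV[C]_m.+1 := \col_k
  (if unlift ord0 k is Some j then y j 0
   else - (\sum_j K 0 (l0 j) * y j 0) / K 0 0).

Lemma mulmx_col0 K x : (K *m x) 0 0 = K 0 0 * x 0 0 + \sum_j K 0 (l0 j) * x (l0 j) 0.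
Proof. by rewrite mxE big_ord_recl. Qed.

Lemma mulmx_col_lift K x i :
  (K *m x) (l0 i) 0 = K (l0 i) 0 * x 0 0 + \sum_j K (l0 i) (l0 j) * x (l0 j) 0.
Proof. by rewrite mxE big_ord_recl. Qed.

Lemma schur_mulmx K x i : K 0 0 != 0 ->
  (schur K *m tail_col x) i 0 = (K *m x) (l0 i) 0 - K (l0 i) 0 / K 0 0 * (K *m x) 0 0.
Proof.
move=> K00; rewrite mulmx_col_lift mulmx_col0 mxE.
under eq_bigr => j _ do rewrite !mxE mulrBl.
rewrite sumrB.
have -> : \sum_j K (l0 i) 0 * K 0 (l0 j) / K 0 0 * x (l0 j) 0 =
    K (l0 i) 0 / K 0 0 * \sum_j K 0 (l0 j) * x (l0 j) 0.
  by rewrite mulr_sumr; apply: eq_bigr => j _; ring.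
by set S1 := \sum_(j < m) _; set S2 := \sum_(j < m) _; field.
Qed.

Lemma tail_schur_ext K y : tail_col (schur_ext K y) = y.
Proof. by apply/matrixP => i j; rewrite !mxE liftK ord1. Qed.

Lemma mulmx_schur_ext0 K y : K 0 0 != 0 -> (K *m schur_ext K y) 0 0 = 0.
Proof.
move=> K00; rewrite mulmx_col0 [schur_ext _ _ 0 0]mxE unlift_none.
under [X in _ + X]eq_bigr => j _ do rewrite mxE liftK.
by set S := \sum_(j < m) _; field.
Qed.

Lemma hermitian_schur K : Defs.hermitian K -> Defs.hermitian (schur K).
Proof.
move=> hK; apply/matrixP => i j; rewrite !mxE !(rmorphB, rmorphM, fmorph_div) /=.
by rewrite conjc_inv !hermitian_conj //; ring.
Qed.

(* Completing the square on the head coordinate. *)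
Lemma qform_schur K x : Defs.hermitian K -> K 0 0 != 0 ->
  qform K x = qform (schur K) (tail_col x) + cj ((K *m x) 0 0) * (K *m x) 0 0 / K 0 0.
Proof.
move=> hK K00; have K00_real : cj (K 0 0) = K 0 0 by exact: hermitian_conj.
rewrite !qformE big_ord_recl.
under [in RHS]eq_bigr => i _ do rewrite [tail_col x _ _]mxE schur_mulmx // mulrBr.
rewrite sumrB; set c := (K *m x) 0 0.
have -> : \sum_i cj (x (l0 i) 0) * (K (l0 i) 0 / K 0 0 * c) =
    cj (\sum_i K 0 (l0 i) * x (l0 i) 0) * c / K 0 0.
  rewrite rmorph_sum !mulr_suml; apply: eq_bigr => i _.
  by rewrite rmorphM /= hermitian_conj //; ring.
have -> : \sum_i K 0 (l0 i) * x (l0 i) 0 = c - K 0 0 * x 0 0 by rewrite /c mulmx_col0; ring.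
rewrite rmorphB rmorphM /= K00_real.
by set S := \sum_(i < m) _; field.
Qed.

Lemma psd_schur K : psd K -> K 0 0 != 0 -> psd (schur K).
Proof.
move=> [hK hpos] K00; split; first exact: hermitian_schur.
move=> y; have := hpos (schur_ext K y); rewrite -!/(qform _ _).
by rewrite qform_schur // mulmx_schur_ext0 // tail_schur_ext mulr0 mul0r addr0.
Qed.

Lemma psd_of_schur K : Defs.hermitian K -> 0 < K 0 0 -> psd (schur K) -> psd K.
Proof.
move=> hK K00 [_ hpos]; split => // x; rewrite -/(qform _ _) qform_schur ?gt_eqF //.
rewrite addr_ge0 ?hpos // divr_ge0 ?(ltW K00) // mulrC; exact: mulcJ_ge0.
Qed.

End Schur.

Section DiagonalShift.
Variable R : realType.
Local Notation C := R[i].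
Local Notation l0 := (lift ord0).

Definition pad0_mx m (D : 'M[C]_m) : 'M[C]_m.+1 := \matrix_(i, j)
  (if (unlift ord0 i, unlift ord0 j) is (Some i', Some j') then D i' j' else 0).

Lemma pad0_mx_lift m (D : 'M[C]_m) i j : pad0_mx D (l0 i) (l0 j) = D i j.
Proof. by rewrite mxE !liftK. Qed.

Lemma pad0_mx_ord0l m (D : 'M[C]_m) j : pad0_mx D 0 j = 0.
Proof. by rewrite mxE unlift_none. Qed.

Lemma pad0_mx_ord0r m (D : 'M[C]_m) i : pad0_mx D i 0 = 0.
Proof. by rewrite mxE unlift_none; case: unlift. Qed.

Lemma is_diag_pad0 m (D : 'M[C]_m) : is_diag D -> is_diag (pad0_mx D).
Proof.
move=> hD i j; case: (unliftP ord0 i) => [i'|] ->; rewrite ?pad0_mx_ord0l //.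
case: (unliftP ord0 j) => [j'|] ->; rewrite ?pad0_mx_ord0r // pad0_mx_lift => ij.
by apply: hD; apply: contraNneq ij => ->.
Qed.

Lemma hermitian_pad0 m (D : 'M[C]_m) : Defs.hermitian D -> Defs.hermitian (pad0_mx D).
Proof.
move=> hD; apply/matrixP => i j; rewrite [LHS]mxE [LHS]mxE.
case: (unliftP ord0 i) => [i'|] ->; case: (unliftP ord0 j) => [j'|] ->;
  rewrite ?pad0_mx_lift ?pad0_mx_ord0l ?pad0_mx_ord0r ?conjc0 //.
exact: hermitian_conj.
Qed.

Lemma schurB_pad0 m (K : 'M[C]_m.+1) D : schur (K - pad0_mx D) = schur K - D.
Proof.
by apply/matrixP => i j; rewrite !mxE !liftK unlift_none !subr0; ring.
Qed.

(* Induction through the Schur complement of the head pivot; a zero pivot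
   already makes [e_0] a kernel vector. *)
Lemma psd_subr_diag_singular m (K : 'M[C]_m.+1) : psd K ->
  exists D : 'M[C]_m.+1, [/\ is_diag D, psd (K - D) &
    exists2 x : 'cV[C]_m.+1, x != 0 & (K - D) *m x = 0].
Proof.
elim: m K => [|m IH] K hK.
  exists K; split; first by move=> i j; rewrite !ord1 eqxx.
    by rewrite subrr; exact: psd0.
  exists (const_mx 1); last by rewrite subrr mul0mx.
  by apply/eqP => /matrixP/(_ 0 0); rewrite !mxE => /eqP; rewrite oner_eq0.
have [K00|K00] := eqVneq (K 0 0) 0.
  exists 0; split; first by move=> i j _; rewrite mxE.
    by rewrite subr0.
  exists (delta_mx 0 0).
    by apply/eqP => /matrixP/(_ 0 0); rewrite !mxE !eqxx => /eqP; rewrite oner_eq0.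
  rewrite subr0 -colE; apply/matrixP => i j.
  by rewrite !mxE -(hermitian_conj _ _ hK.1) (psd_row_eq0 _ hK K00) conjc0.
have [D' [hD' hpsd' [y y_neq0 hy]]] := IH _ (psd_schur hK K00).
have D'_herm : Defs.hermitian D'.
  rewrite -[D'](subKr (schur K)).
  by apply: hermitianB; [exact: hermitian_schur hK.1 | exact: hpsd'.1].
have KD00 : (K - pad0_mx D') 0 0 = K 0 0 by rewrite !mxE unlift_none subr0.
have KD_herm : Defs.hermitian (K - pad0_mx D').
  by apply: hermitianB; [exact: hK.1 | exact: hermitian_pad0].
exists (pad0_mx D'); split; first exact: is_diag_pad0.
  apply: psd_of_schur => //; last by rewrite schurB_pad0.
  by rewrite KD00 lt_def K00 psd_diag_ge0.
have KD00_neq0 : (K - pad0_mx D') 0 0 != 0 by rewrite KD00.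
exists (schur_ext (K - pad0_mx D') y).
  apply: contraNneq y_neq0 => e.
  by rewrite -(tail_schur_ext (K - pad0_mx D') y) e; apply/eqP/matrixP => i j; rewrite !mxE.
apply/matrixP => i j; rewrite [j]ord1 [RHS]mxE.
case: (unliftP ord0 i) => [i'|] ->; last exact: mulmx_schur_ext0.
have := schur_mulmx (schur_ext (K - pad0_mx D') y) i' KD00_neq0.
by rewrite tail_schur_ext schurB_pad0 hy mulmx_schur_ext0 // mulr0 subr0 mxE.
Qed.

End DiagonalShift.

Section Rank.
Variable F : fieldType.

Lemma mxrank_le_of_ker m (A : 'M[F]_m.+1) (x : 'cV[F]_m.+1) :
  x != 0 -> A *m x = 0 -> (\rank A <= m)%N.
Proof.
move=> x_neq0 Ax0; rewrite leqNgt; apply: contra x_neq0 => rkA.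
have freeAt : row_free A^T by rewrite /row_free mxrank_tr eqn_leq rank_leq_row.
apply/eqP/trmx_inj; rewrite trmx0; apply: (row_free_inj freeAt).
by rewrite -trmx_mul Ax0 !trmx0 mul0mx.
Qed.

Lemma mxrank_ge_of_ker_last m (A : 'M[F]_m.+1) :
  (forall x : 'cV[F]_m.+1, A *m x = 0 -> x ord_max 0 = 0 -> x = 0) -> (m <= \rank A)%N.
Proof.
move=> hA; pose w := widen_ord (leqnSn m).
pose E : 'M[F]_(m.+1, m) := \matrix_(i, j) (i == w j)%:R.
have Ew (u : 'cV[F]_m) j : (E *m u) (w j) 0 = u j 0.
  rewrite mxE (bigD1 j) //= big1 ?addr0; first by rewrite mxE eqxx mul1r.
  move=> k kj; rewrite mxE (_ : w j == w k = false) ?mul0r //.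
  by apply/negbTE; rewrite -val_eqE /= eq_sym val_eqE.
have Elast (u : 'cV[F]_m) : (E *m u) ord_max 0 = 0.
  rewrite mxE big1 // => k _; rewrite mxE (_ : ord_max == w k = false) ?mul0r //.
  by rewrite -val_eqE /= gtn_eqF.
have : row_free (A *m E)^T.
  apply: inj_row_free => v hv; have hx : A *m (E *m v^T) = 0.
    by rewrite mulmxA -[A *m E]trmxK -trmx_mul hv trmx0.
  have e := hA _ hx (Elast _); apply/matrixP => k j; rewrite [k]ord1 mxE.
  by have := Ew v^T j; rewrite e !mxE.
rewrite /row_free mxrank_tr => /eqP rkAE.
by rewrite -[X in (X <= _)%N]rkAE mxrankM_maxl.
Qed.

End Rank.

Section LowerBound.
Variable R : realType.
Local Notation C := R[i].
Local Notation l0 := (lift ord0).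

(* The graph on indices with an edge wherever [H] is nonzero is connected. *)
Definition connected_support n (H : 'M[C]_n) : Prop :=
  forall A : {set 'I_n}, A != set0 -> A != setT ->
  exists i j, [/\ i \in A, j \notin A & H i j != 0].

Definition offdiag_sector n (a : R) (H : 'M[C]_n) : Prop :=
  forall i j : 'I_n, i != j -> sector0 a (- H i j).

(* A cut [A] with no edge across it gives a block decomposition: list [A] first. *)
Lemma irreducible_connected n (S : 'M[C]_n.+1) :
  Defs.hermitian S -> Defs.irreducible S -> connected_support S.
Proof.
move=> hS Sirr A A0 AT.
have [/existsP[i /existsP[j /and3P[iA jA Sij]]]|noedge] :=
  boolP [exists i, exists j, [&& i \in A, j \notin A & S i j != 0]].
  by exists i, j.
exfalso; apply: Sirr.
have cut0 i j : i \in A -> j \notin A -> S i j = 0.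
  move=> iA jA; apply/eqP; apply: contraNT noedge => Sij.
  by apply/existsP; exists i; apply/existsP; exists j; rewrite iA jA Sij.
set s := enum A ++ enum (~: A).
have s_size : size s = n.+1 by rewrite size_cat -!cardE cardsC card_ord.
have s_uniq : uniq s.
  by rewrite cat_uniq !enum_uniq /= andbT; apply/hasPn => x; rewrite !mem_enum in_setC.
pose f (i : 'I_n.+1) := nth ord0 s i.
have f_inj : injective f.
  by move=> i j /eqP; rewrite /f nth_uniq ?s_size // => /eqP/val_inj.
have fA i : (f i \in A) = (i < #|A|)%N.
  rewrite /f nth_cat -cardE; case: ltnP => iA; first by rewrite -mem_enum mem_nth -?cardE.
  have iAc : (i - #|A| < size (enum (~: A)))%N.
    by rewrite -cardE ltn_subLR // cardsC card_ord.
  by have := mem_nth ord0 iAc; rewrite mem_enum in_setC => /negbTE.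
exists (perm f_inj), #|A|; split.
  rewrite lt0n cards_eq0 A0 /=.
  by have := proper_card (A := A) (B := setT); rewrite properT cardsT card_ord; apply.
move=> i j; rewrite !permE -!fA.
case: (boolP (f i \in A)) => fiA; case: (boolP (f j \in A)) => fjA //= _.
  exact: cut0.
by rewrite -(hermitian_conj _ _ hS) cut0 // conjc0.
Qed.

Lemma connected_support_offdiag_eq n (H H' : 'M[C]_n) :
  (forall i j, i != j -> H' i j = H i j) -> connected_support H -> connected_support H'.
Proof.
move=> eqH hH A A0 AT; have [i [j [iA jA Hij]]] := hH A A0 AT.
exists i, j; split => //; rewrite eqH //.
by apply: contraNneq jA => <-.
Qed.

Lemma offdiag_sector_offdiag_eq n a (H H' : 'M[C]_n) :
  (forall i j, i != j -> H' i j = H i j) -> offdiag_sector a H -> offdiag_sector a H'.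
Proof. by move=> eqH hH i j ij; rewrite eqH //; exact: hH. Qed.

Lemma offdiag_sector_neq0 n a (H : 'M[C]_n) i j :
  offdiag_sector a H -> i != j -> H i j != 0 -> sector a (- H i j).
Proof. by move=> hH ij Hij; case: (hH i j ij) => // /eqP; rewrite oppr_eq0 (negbTE Hij). Qed.

Lemma psd_connected_diag_gt0 m (K : 'M[C]_m.+2) i :
  psd K -> connected_support K -> 0 < K i i.
Proof.
move=> hK hc; rewrite lt_def psd_diag_ge0 // andbT.
have i0 : [set i] != set0 by apply/set0Pn; exists i; rewrite set11.
have iT : [set i] != setT.
  apply/negP => /eqP iT; move: (in_setT (lift i ord0)).
  by rewrite -iT in_set1 eq_sym (negbTE (neq_lift _ _)).
have [i' [j [/set1P -> _ Kij]]] := hc _ i0 iT.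
by apply/eqP => Kii0; move/eqP: Kij; apply; exact: psd_row_eq0.
Qed.

Lemma schur_oppE m (K : 'M[C]_m.+1) i j :
  - schur K i j = - K (l0 i) (l0 j) + (- K (l0 i) 0) * (- K 0 (l0 j)) * (K 0 0)^-1.
Proof. by rewrite mxE mulrNN; ring. Qed.

Section SchurSector.
Variables (m : nat) (a : R).
Hypotheses (sin_gt0 : 0 < sin a) (cos_gt0 : 0 < cos a) (cos2_ge0 : 0 <= cos (a *+ 2)).
Implicit Types (K : 'M[C]_m.+1).

Lemma offdiag_sector_schur K : 0 < K 0 0 -> offdiag_sector a K ->
  offdiag_sector (a *+ 2) (schur K).
Proof.
move=> K00 hK i j ij; rewrite schur_oppE.
apply: sector0D cos2_ge0 _ _.
  by apply: sector0_double => //; apply: hK; rewrite (inj_eq lift_inj).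
apply: sector0_mulr_gt0; first by rewrite invr_gt0.
by apply: sector0M => //; apply: hK; rewrite ?neq_lift // eq_sym neq_lift.
Qed.

(* An entry of the Schur complement is a sum of two terms in the sector [2a],
   so it vanishes only when both terms do. *)
Lemma schur_neq0 K i l : 0 < K 0 0 -> offdiag_sector a K -> i != l ->
  K (l0 i) (l0 l) != 0 \/ (K (l0 i) 0 != 0 /\ K 0 (l0 l) != 0) ->
  schur K i l != 0.
Proof.
move=> K00 hK il hnz.
have il' : l0 i != l0 l by rewrite (inj_eq lift_inj).
have i0 : l0 i != 0 by rewrite eq_sym neq_lift.
have l0' : 0 != l0 l by exact: neq_lift.
have K00_inv : 0 < (K 0 0)^-1 by rewrite invr_gt0.
rewrite -oppr_eq0 schur_oppE; apply: (@sector_neq0 _ (a *+ 2)).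
case: hnz => [Kil | [Ki0 K0l]].
  apply: sectorD0 cos2_ge0 _ _.
    by apply: sector_double => //; exact: offdiag_sector_neq0.
  by apply: sector0_mulr_gt0 K00_inv _; apply: sector0M => //; [exact: hK i0 | exact: hK l0'].
rewrite addrC; apply: sectorD0 cos2_ge0 _ _.
  apply: sector_mulr_gt0 K00_inv _; apply: sectorM => //; exact: offdiag_sector_neq0.
by apply: sector0_double => //; exact: hK il'.
Qed.

(* A cut [A] of the lower indices lifts to the cut [A] or [0 |: A] of [K]; an edge
   across it either survives in [schur K] or passes through the pivot [0]. *)
Lemma connected_schur K : 0 < K 0 0 -> offdiag_sector a K ->
  connected_support K -> connected_support (schur K).
Proof.
move=> K00 hs hK A A0 AT.
set A' := [set l0 i | i in A].
have memA' i : (l0 i \in A') = (i \in A) by rewrite mem_imset //; exact: lift_inj.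
have A'0 : 0 \notin A' by apply/imsetP => -[i _] /eqP; rewrite (negbTE (neq_lift _ _)).
have [l _ lA] : exists2 l, l \in setT & l \notin A by apply/subsetPn; rewrite subTset.
have neq_cut x y : x \in A -> y \notin A -> x != y by move=> xA; apply: contraNneq => <-.
have A'_neq0 : A' != set0.
  by case/set0Pn: A0 => i iA; apply/set0Pn; exists (l0 i); rewrite memA'.
have A'_neqT : A' != setT by apply: contraNneq A'0 => ->; rewrite in_setT.
have [i [j [iA' jA' Kij]]] := hK A' A'_neq0 A'_neqT.
case/imsetP: iA' Kij => {}i iA -> Kij.
case: (unliftP ord0 j) jA' Kij => [j'|] -> jA' Kij.
  rewrite memA' in jA'; exists i, j'; split => //.
  by apply: schur_neq0 => //; [exact: neq_cut | left].
have B_neq0 : 0 |: A' != set0 by apply/set0Pn; exists 0; rewrite setU11.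
have B_neqT : 0 |: A' != setT.
  apply/negP => /eqP BT; move: (in_setT (l0 l)); rewrite -BT in_setU1 memA'.
  by rewrite (negbTE lA) orbF eq_sym (negbTE (neq_lift _ _)).
have [k [j2 [kB j2B Kkj]]] := hK _ B_neq0 B_neqT.
case: (unliftP ord0 j2) j2B Kkj => [l2|] -> j2B Kkj; last by rewrite setU11 in j2B.
have l2A : l2 \notin A by move: j2B; rewrite in_setU1 memA' negb_or => /andP[].
move: kB Kkj; rewrite in_setU1 => /orP[/eqP ->|/imsetP[k' k'A ->]] Kkj.
  by exists i, l2; split => //; apply: schur_neq0 => //; [exact: neq_cut | right].
by exists k', l2; split => //; apply: schur_neq0 => //; [exact: neq_cut | left].
Qed.

End SchurSector.

(* Each Schur step removes one index and doubles the sector, which stays within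
   a right angle as long as [a * 2 ^ (size of K)] is at most [pi]. *)
Lemma psd_connected_ker_last m (a : R) (K : 'M[C]_m.+1) :
  0 < a -> a * 2 ^+ m.+1 <= pi ->
  psd K -> connected_support K -> offdiag_sector a K ->
  forall x : 'cV[C]_m.+1, K *m x = 0 -> x ord_max 0 = 0 -> x = 0.
Proof.
elim: m a K => [|m IH] a K a0 ha hK hc hs x Kx0 xlast.
  by apply/matrixP => i j; rewrite !ord1 mxE -xlast; congr (x _ _); exact: val_inj.
have a2E : a *+ 2 * 2 ^+ m.+1 = a * 2 ^+ m.+2 by rewrite !exprS; ring.
have [sin_gt0 cos_gt0 cos2_ge0] : [/\ 0 < sin a, 0 < cos a & 0 <= cos (a *+ 2)].
  apply: (quarter_angle_trig a0 (le_trans _ ha)).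
  rewrite -[a *+ 4]mulr_natr (ler_pM2l a0) -natrX ler_nat !expnS mulnA.
  by rewrite (leq_pmulr 4) ?expn_gt0.
have K00 := psd_connected_diag_gt0 0 hK hc.
have K00_neq0 : K 0 0 != 0 by rewrite gt_eqF.
have tail0 : tail_col x = 0.
  apply: (IH (a *+ 2) (schur K)); rewrite ?mulrn_wgt0 ?a2E //.
  - exact: psd_schur.
  - exact: (connected_schur (m := m.+1) sin_gt0 cos_gt0 cos2_ge0 K00 hs hc).
  - exact: (offdiag_sector_schur (m := m.+1) sin_gt0 cos_gt0 cos2_ge0 K00 hs).
  - by apply/matrixP => i j; rewrite [j]ord1 schur_mulmx // Kx0 !mxE mulr0 subrr.
  - by rewrite mxE -xlast; congr (x _ _); apply: val_inj.
have x_lift i : x (l0 i) 0 = 0 by move/matrixP/(_ i 0): tail0; rewrite !mxE.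
have x0 : x 0 0 = 0.
  move/(congr1 (fun M : 'cV_m.+2 => M 0 0)): Kx0; rewrite mulmx_col0 mxE.
  rewrite big1 ?addr0 => [/eqP|j _]; last by rewrite x_lift mulr0.
  by rewrite mulf_eq0 (negbTE K00_neq0) => /eqP.
by apply/matrixP => i j; rewrite [j]ord1 mxE; case: (unliftP ord0 i) => [i'|] ->.
Qed.

End LowerBound.

Unset Implicit Arguments.

Theorem theorem4 (R : realType) (n : nat) (S : 'M[R[i]]_n) :
  psd S -> irreducible S ->
  (forall i j : 'I_n, i != j -> S i j != 0 ->
     arg_in (- S i j) (- (pi / 2 ^+ n)) (pi / 2 ^+ n)) ->
  is_mr S n.-1.
Proof.
case: n S => [|m] S hS Sirr hS_arg.
  split=> [|Sh St _ //]; exists 0, 0; split; last by rewrite mxrank0.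
  by split; [apply/matrixP => i; case: i | split; [exact: psd0 | move=> i j _; rewrite mxE]].
set a : R := pi / 2 ^+ m.+1.
have pi0 : 0 < pi :> R by exact: pi_gt0.
have a0 : 0 < a by rewrite divr_gt0 // exprn_gt0.
have aE : a * 2 ^+ m.+1 = pi by rewrite /a mulfVK // expf_neq0 // pnatr_eq0.
have a_le : a <= pi / 2.
  apply: ler_wpM2l; first exact: ltW.
  by rewrite lef_pV2 ?posrE ?exprn_gt0 // exprS ler_peMr ?exprn_ege1 ?ler1n.
have hc := irreducible_connected hS.1 Sirr.
have hsec : offdiag_sector a S.
  move=> i j ij; have [->|Sij] := eqVneq (S i j) 0; first by left; rewrite oppr0.
  by right; apply: arg_in_sector => //; [rewrite oppr_eq0 | exact: hS_arg].
have rank_ge Sh St : decomp S Sh St -> (m <= \rank Sh)%N.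
  move=> [eS [hSh hSt]].
  have off i j : i != j -> Sh i j = S i j by move=> ij; rewrite eS mxE hSt // add0r.
  apply/mxrank_ge_of_ker_last/(psd_connected_ker_last a0 _ hSh); first by rewrite aE.
    exact: connected_support_offdiag_eq off hc.
  exact: offdiag_sector_offdiag_eq off hsec.
have [D [hD hSD [x x_neq0 Dx0]]] := psd_subr_diag_singular hS.
have SD_decomp : decomp S (S - D) D by split; [rewrite addrC subrK | split].
split => //; exists (S - D), D; split => //.
by apply/eqP; rewrite eqn_leq (mxrank_le_of_ker x_neq0 Dx0) (rank_ge _ _ SD_decomp).
Qed.
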